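(* Let $G$ be a framed graph with framing $f$, and let $a,b\in V(G)$ be distinct vertices. Let $\widetilde G_{ab}$ be the framed graph on $V(G)$ obtained from $G$ as follows: for every vertex $c\ne a,b$, the adjacency of $c$ and $a$ is toggled iff $c$ is adjacent to $b$ in $G$; the adjacency of $a$ and $b$ is toggled iff $f(b)=1$; the framing of $a$ becomes $f(a)+f(b)\pmod 2$; all other adjacencies and framings are unchanged. Then $$D(\widetilde G_{ab})=\widetilde{D(G)}_{ab},$$ where $D(\cdot)$ denotes the nondegeneracy delta-matroid.
   Context: A framed graph is a simple graph $G$ with a map $f:V(G)\to\{0,1\}$; its adjacency matrix over $\mathbb{F}_2$ has diagonal entry $f(v)$ at $v$ and the usual off-diagonal entries. Its nondegeneracy delta-matroid is $D(G)=(V(G);\{U\subseteq V(G)\mid$ the adjacency matrix of the induced framed subgraph $G_U$ is nondegenerate over $\mathbb{F}_2\})$ (empty matrix counts as nondegenerate). For a set system $D=(E;\Phi)$ ($E$ finite, $\Phi\subseteq 2^E$ nonempty) and distinct $a,b\in E$, the sliding of $a$ over $b$ is $\widetilde D_{ab}=(E;\widetilde\Phi_{ab})$ with $\widetilde\Phi_{ab}=\Phi\,\Delta\,\{\phi\sqcup\{a\}\mid \phi\subseteq E\setminus\{a,b\},\ \phi\sqcup\{b\}\in\Phi\}$. *)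

From mathcomp Require Import all_boot all_algebra.
Set Implicit Arguments. Unset Strict Implicit. Unset Printing Implicit Defensive.
Import GRing.Theory.
Local Open Scope ring_scope.

Record framed_graph (V : finType) := FramedGraph {
  adj : V -> V -> bool;
  fr : V -> bool }.

Definition simple_fg (V : finType) (G : framed_graph V) : Prop :=
  (forall x y, adj G x y = adj G y x) /\ (forall x, adj G x x = false).

Definition b2F (b : bool) : 'F_2 := if b then 1 else 0.

Definition fg_entry (V : finType) (G : framed_graph V) (x y : V) : 'F_2 :=
  if x == y then b2F (fr G x) else b2F (adj G x y).

Definition induced_adjmx (V : finType) (G : framed_graph V) (U : {set V})
  : 'M['F_2]_#|U| :=
  \matrix_(i, j) fg_entry G (enum_val i) (enum_val j).

(* nondegenerate over F_2; the 0x0 matrix has det 1, so empty counts *)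
Definition nondeg_set (V : finType) (G : framed_graph V) (U : {set V}) : bool :=
  \det (induced_adjmx G U) != 0.

Definition nondeg_dm (V : finType) (G : framed_graph V) : {set {set V}} :=
  [set U : {set V} | nondeg_set G U].

Definition sliding (V : finType) (Phi : {set {set V}}) (a b : V)
  : {set {set V}} :=
  let T := [set phi :|: [set a] | phi in
             [set phi : {set V} | (phi \subset ~: [set a; b])
                                  && (phi :|: [set b] \in Phi)]] in
  (Phi :\: T) :|: (T :\: Phi).

Definition slide_graph (V : finType) (G : framed_graph V) (a b : V)
  : framed_graph V :=
  FramedGraph
    (fun x y =>
       if x == y then adj G x y
       else if (x == a) && (y == b) || (x == b) && (y == a)
            then adj G x y (+) fr G b
       else if x == a then adj G x y (+) adj G b y
       else if y == a then adj G x y (+) adj G x b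
       else adj G x y)
    (fun x => if x == a then fr G a (+) fr G b else fr G x).

From mathcomp Require Import all_boot all_algebra ring.
Set Implicit Arguments. Unset Strict Implicit. Unset Printing Implicit Defensive.
Import GRing.Theory. Local Open Scope ring_scope.

(* Sliding [a] over [b] in the graph is the congruence M |-> E M E^T, where E
   adds row [b] to row [a]; on an induced matrix containing [a] this makes the
   row and column of [a] those of [a] plus those of [b].  Expanding the
   determinant multilinearly in that row and column, the two mixed terms are
   transposes of each other and cancel over F_2, so
   det (~G_ab)_U = det G_U + det G_U', where U' is U with [a] renamed [b].
   If [b] is in U the last determinant has two equal rows and vanishes; if
   not, it is the determinant of G on U - a + b.  Reading "nonzero" in F_2
   turns this sum into the symmetric difference defining the sliding. *)

Lemma F2_addrr (x : 'F_2) : x + x = 0.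
Proof. by apply: addrr_pchar2; apply: pchar_Fp. Qed.

Lemma F2_addr_neq0 (x y : 'F_2) : (x + y != 0) = (x != 0) (+) (y != 0).
Proof.
have F2_cases (z : 'F_2) : z = 0 \/ z = 1.
  by case: z => [[|[|m]] lt_z2]; [left | right | by []]; apply: val_inj.
by case: (F2_cases x) => ->; case: (F2_cases y) => ->; rewrite ?F2_addrr.
Qed.

Lemma b2F_addb (p q : bool) : b2F (p (+) q) = b2F p + b2F q.
Proof. by case: p; case: q; rewrite /b2F /= ?addr0 ?add0r ?F2_addrr. Qed.

Section DeterminantSplit.

Variables (R : comPzRingType) (n : nat).

Lemma det_split_row (k : 'I_n) (B C D : 'M[R]_n) :
  (forall i j, i != k -> B i j = C i j) -> (forall i j, i != k -> D i j = C i j) ->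
  (forall j, B k j = C k j + D k j) -> \det B = \det C + \det D.
Proof.
move=> eqBC eqDC rowB.
rewrite (determinant_multilinear (b:=1) (c:=1) (i0:=k) (B:=C) (C:=D)) ?mul1r //.
- by apply/rowP => j; rewrite !mxE !mul1r rowB.
- by apply/matrixP => i j; rewrite !mxE eqBC // eq_sym neq_lift.
- by apply/matrixP => i j; rewrite !mxE eqBC ?eqDC // eq_sym neq_lift.
Qed.

Lemma det_split_col (k : 'I_n) (B C D : 'M[R]_n) :
  (forall i j, j != k -> B i j = C i j) -> (forall i j, j != k -> D i j = C i j) ->
  (forall i, B i k = C i k + D i k) -> \det B = \det C + \det D.
Proof.
move=> eqBC eqDC colB; rewrite -det_tr -(det_tr C) -(det_tr D).
by apply: (@det_split_row k) => [i j ik|i j ik|j]; rewrite !mxE; auto.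
Qed.

End DeterminantSplit.

Lemma det_reindex (R : comPzRingType) (T : finType) (A : T -> T -> R) n m
    (e1 : 'I_n -> T) (e2 : 'I_m -> T) :
  injective e1 -> injective e2 -> codom e1 =i codom e2 ->
  \det (\matrix_(i, j) A (e1 i) (e1 j)) = \det (\matrix_(i, j) A (e2 i) (e2 j)).
Proof.
move=> inj_e1 inj_e2 e12.
have e2_in j : e2 j \in codom e1 by rewrite e12 codom_f.
pose p j := iinv (e2_in j).
have e1p j : e1 (p j) = e2 j by exact: f_iinv.
have inj_p : injective p by move=> j k /(congr1 e1); rewrite !e1p; exact: inj_e2.
have eq_mn : m = n.
  by rewrite -(card_ord m) -(card_ord n) -(card_codom inj_e1) -(card_codom inj_e2)
     (eq_card e12).
subst m.
have -> : \matrix_(i, j) A (e2 i) (e2 j) =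
    row_perm (perm.perm inj_p) (col_perm (perm.perm inj_p) (\matrix_(i, j) A (e1 i) (e1 j))).
  by apply/matrixP => i j; rewrite !mxE !perm.permE !e1p.
by rewrite row_permE col_permE !det_mulmx !det_perm mulrCA -signr_addb
  perm.odd_permV addbb expr0 mulr1.
Qed.

Lemma in_symdiff (T : finType) (A B : {set T}) (x : T) :
  (x \in (A :\: B) :|: (B :\: A)) = (x \in A) (+) (x \in B).
Proof. by rewrite !inE; case: (x \in A); case: (x \in B). Qed.

Section Sliding.

Variables (V : finType) (G : framed_graph V) (a b : V).
Hypotheses (simpleG : simple_fg G) (neq_ab : a != b).

Lemma fg_entry_sym x y : fg_entry G x y = fg_entry G y x.
Proof.
case: simpleG => adj_sym _; rewrite /fg_entry eq_sym.
by case: eqP => [->|]; rewrite // adj_sym.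
Qed.

Lemma fg_entry_slide x y :
  fg_entry (slide_graph G a b) x y =
  fg_entry G x y + (if x == a then fg_entry G b y else 0)
   + (if y == a then fg_entry G x b else 0)
   + (if (x == a) && (y == a) then fg_entry G b b else 0).
Proof.
case: simpleG => adj_sym adj_irr; rewrite /fg_entry /slide_graph /=.
have neq_ba : b != a by rewrite eq_sym.
case: (eqVneq x a) => [->|xa]; [|case: (eqVneq x b) => [->|xb]];
case: (eqVneq y a) => [->|ya]; try (case: (eqVneq y b) => [->|yb]);
rewrite /= ?eqxx ?(negbTE neq_ab) ?(negbTE neq_ba) ?(negbTE xa) ?(negbTE xb)
  ?(negbTE ya) ?(negbTE yb) /= ?b2F_addb ?addr0.
all: try (case: (eqVneq x y) => [->|xy]; rewrite ?eqxx ?(negbTE xy) /= ?addr0 //).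
- by rewrite (adj_sym b a) -(addrA (b2F (fr G a))) F2_addrr addr0.
all: try done.
by case: (b == y).
Qed.

Definition rename_ab (x : V) : V := if x == a then b else x.

Lemma induced_slide_notin (U : {set V}) :
  a \notin U -> induced_adjmx (slide_graph G a b) U = induced_adjmx G U.
Proof.
move=> aU; apply/matrixP => i j; rewrite !mxE fg_entry_slide.
have neq_a (k : 'I_#|U|) : (enum_val k == a) = false.
  by apply: contraNF aU => /eqP <-; exact: enum_valP.
by rewrite !neq_a /= !addr0.
Qed.

Lemma det_induced_slide (U : {set V}) : a \in U ->
  \det (induced_adjmx (slide_graph G a b) U) =
  \det (induced_adjmx G U) +
  \det (\matrix_(i, j) fg_entry G (rename_ab (enum_val i)) (rename_ab (enum_val j))
        : 'M_#|U|).
Proof.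
move=> aU.
pose s : 'I_#|U| -> V := enum_val.
pose ia := enum_rank_in aU a.
have s_ia : s ia = a by exact: enum_rankK_in.
have s_neq i : i != ia -> (s i == a) = false.
  by apply: contraNF => /eqP s_i; apply/eqP/enum_val_inj; rewrite -/s s_i s_ia.
have renameE i : i != ia -> rename_ab (s i) = s i by move/s_neq; rewrite /rename_ab => ->.
pose X (g : V -> V) : 'M_#|U| :=
  \matrix_(i, j) (fg_entry G (g (s i)) (s j)
                  + (if s j == a then fg_entry G (g (s i)) b else 0)).
pose M (g h : V -> V) : 'M_#|U| := \matrix_(i, j) fg_entry G (g (s i)) (h (s j)).
have split_row : \det (induced_adjmx (slide_graph G a b) U) = \det (X id) + \det (X rename_ab).
  apply: (@det_split_row _ _ ia) => [i j ii|i j ii|j]; rewrite !mxE.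
  - by rewrite fg_entry_slide -/s s_neq //= !addr0.
  - by rewrite renameE.
  - by rewrite fg_entry_slide -/s s_ia /rename_ab eqxx /=; case: (s j == a); ring.
have split_col g : \det (X g) = \det (M g id) + \det (M g rename_ab).
  apply: (@det_split_col _ _ ia) => [i j jj|i j jj|i]; rewrite !mxE.
  - by rewrite s_neq // addr0.
  - by rewrite renameE.
  - by rewrite s_ia /rename_ab eqxx.
have mixed_tr : \det (M id rename_ab) = \det (M rename_ab id).
  by rewrite -det_tr; congr (\det _); apply/matrixP => i j; rewrite !mxE fg_entry_sym.
rewrite split_row !split_col mixed_tr addrA -(addrA (\det (M id id))) F2_addrr addr0.
by congr (\det _ + \det _); apply/matrixP => i j; rewrite !mxE.
Qed.

Lemma det_rename_in (U : {set V}) : a \in U -> b \in U ->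
  \det (\matrix_(i, j) fg_entry G (rename_ab (enum_val i)) (rename_ab (enum_val j))
        : 'M_#|U|) = 0.
Proof.
move=> aU bU; apply: (determinant_alternate (i1 := enum_rank_in aU a) (i2 := enum_rank_in bU b)).
  by apply: contra neq_ab => /eqP/(congr1 enum_val); rewrite !enum_rankK_in // => ->.
by move=> j; rewrite !mxE !enum_rankK_in // /rename_ab eqxx if_same.
Qed.

Lemma det_rename_notin (U : {set V}) : a \in U -> b \notin U ->
  \det (\matrix_(i, j) fg_entry G (rename_ab (enum_val i)) (rename_ab (enum_val j))
        : 'M_#|U|) = \det (induced_adjmx G (U :\ a :|: [set b])).
Proof.
move=> aU bU; apply: det_reindex; [|exact: enum_val_inj|].
- have inj_rename : {in U &, injective rename_ab}.
    move=> x y xU yU; rewrite /rename_ab.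
    case: eqP => [->|_]; case: eqP => [->|_] // => eq_b.
      by move: yU; rewrite -eq_b (negbTE bU).
    by move: xU; rewrite eq_b (negbTE bU).
  by move=> i j /inj_rename eq_ij; apply/enum_val_inj/eq_ij; exact: enum_valP.
- move=> x; apply/codomP/codomP => -[k ->].
    have : rename_ab (enum_val k) \in U :\ a :|: [set b].
      rewrite /rename_ab; case: eqP => [_|/eqP k_a]; rewrite !inE ?eqxx ?orbT //.
      by rewrite k_a enum_valP.
    by move=> W_k; exists (enum_rank_in W_k (rename_ab (enum_val k))); rewrite enum_rankK_in.
  have := enum_valP k; rewrite !inE => /orP [/andP [xa xU]|/eqP ->].
    by exists (enum_rank_in xU (enum_val k)); rewrite /rename_ab enum_rankK_in // (negbTE xa).
  by exists (enum_rank_in aU a); rewrite /rename_ab enum_rankK_in // eqxx.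
Qed.

Lemma mem_sliding (Phi : {set {set V}}) (U : {set V}) :
  (U \in sliding Phi a b) =
  (U \in Phi) (+) [&& a \in U, b \notin U & U :\ a :|: [set b] \in Phi].
Proof.
rewrite /sliding in_symdiff; congr (_ (+) _).
apply/imsetP/and3P => [[phi]|[aU bU inPhi]].
- rewrite inE => /andP [/subsetP phi_ab phibPhi] ->.
  have aphi : a \notin phi by apply/negP => /phi_ab; rewrite !inE eqxx.
  have bphi : b \notin phi by apply/negP => /phi_ab; rewrite !inE eqxx orbT.
  split; first by rewrite !inE eqxx orbT.
    by rewrite !inE negb_or bphi eq_sym.
  suff -> : (phi :|: [set a]) :\ a :|: [set b] = phi :|: [set b] by [].
  by rewrite [phi :|: _]setUC setU1K.
- exists (U :\ a); last by rewrite setUC setD1K.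
  rewrite inE inPhi andbT; apply/subsetP => x; rewrite !inE negb_or => /andP [-> xU].
  by apply: contraNneq bU => <-.
Qed.

End Sliding.

Theorem theorem4p2 (V : finType) (G : framed_graph V) (a b : V) :
  simple_fg G -> a != b ->
  nondeg_dm (slide_graph G a b) = sliding (nondeg_dm G) a b.
Proof.
move=> simpleG neq_ab; apply/setP => U.
rewrite mem_sliding // !inE /nondeg_set.
have [aU|aU] /= := boolP (a \in U); last by rewrite induced_slide_notin ?addbF.
rewrite det_induced_slide // F2_addr_neq0.
have [bU|bU] /= := boolP (b \in U).
  by rewrite (det_rename_in G neq_ab aU bU) eqxx addbF.
by rewrite (det_rename_notin G aU bU).
Qed.
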